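(* Assume $\mathsf G$ is semisimple and let $\mathfrak k$ be a toral $\mathsf H$-subalgebra of $\mathfrak g$. Then the map $\mathfrak k\to\mathfrak{gl}(\mathfrak m_{\mathfrak k}^\perp)$, $X\mapsto\mathrm{ad}(X)|_{\mathfrak m_{\mathfrak k}^\perp}$, is injective.
   Context: $\mathsf G$ compact Lie group, $\mathsf H\subset\mathsf G$ closed, $\mathsf G/\mathsf H$ compact, connected and almost effective. $Q$ is an $\mathrm{Ad}(\mathsf G)$-invariant inner product on $\mathfrak g$ and $\mathfrak m$ the $Q$-orthogonal complement of $\mathfrak h$. An $\mathsf H$-subalgebra is an $\mathrm{Ad}(\mathsf H)$-invariant Lie subalgebra $\mathfrak k$ with $\mathfrak h\subsetneq\mathfrak k\subsetneq\mathfrak g$; it is toral if $[\mathfrak k,\mathfrak k]\subset\mathfrak h$. For such $\mathfrak k$, $\mathfrak m_{\mathfrak k}=\mathfrak k\cap\mathfrak m$ (the $Q$-orthogonal complement of $\mathfrak h$ in $\mathfrak k$) and $\mathfrak m_{\mathfrak k}^\perp$ is the $Q$-orthogonal complement of $\mathfrak m_{\mathfrak k}$ in $\mathfrak m$; one has $[\mathfrak k,\mathfrak m_{\mathfrak k}^\perp]\subset\mathfrak m_{\mathfrak k}^\perp$. *)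

(* Lie-algebra level model of the setting. *)
From HB Require Import structures.
From mathcomp Require Import all_boot all_order all_algebra.
Set Implicit Arguments. Unset Strict Implicit. Unset Printing Implicit Defensive.
Import Order.TTheory GRing.Theory Num.Theory.
Local Open Scope ring_scope.

Section LieDefs.
Variables (R : realFieldType) (V : vectType R).

Definition lie_bracket (br : V -> V -> V) : Prop :=
  [/\ (forall (a : R) x y z, br (a *: x + y) z = a *: br x z + br y z),
      (forall x y, br x y = - br y x)
    & (forall x y z, br x (br y z) + br y (br z x) + br z (br x y) = 0)].

Definition lie_subalgebra (br : V -> V -> V) (S : {vspace V}) : Prop :=
  forall x y, x \in S -> y \in S -> br x y \in S.

Definition lie_ideal (br : V -> V -> V) (I : {vspace V}) : Prop :=
  forall x y, y \in I -> br x y \in I.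

Definition bracket_space (br : V -> V -> V) (U W : {vspace V}) : {vspace V} :=
  <<[seq br x y | x <- (vbasis U : seq V), y <- (vbasis W : seq V)]>>%VS.

Definition derived (br : V -> V -> V) (I : {vspace V}) (n : nat) : {vspace V} :=
  iter n (fun J => bracket_space br J J) I.

Definition solvable_subspace (br : V -> V -> V) (I : {vspace V}) : Prop :=
  exists n, derived br I n = 0%VS.

Definition lie_semisimple (br : V -> V -> V) : Prop :=
  forall I, lie_ideal br I -> solvable_subspace br I -> I = 0%VS.

Definition inner_product (Q : V -> V -> R) : Prop :=
  [/\ (forall (a : R) x y z, Q (a *: x + y) z = a * Q x z + Q y z),
      (forall x y, Q x y = Q y x)
    & (forall x, x != 0 -> 0 < Q x x)].

(* infinitesimal Ad-invariance: ad(x) is Q-skew *)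
Definition ad_invariant (br : V -> V -> V) (Q : V -> V -> R) : Prop :=
  forall x y z, Q (br x y) z + Q y (br x z) = 0.

Definition almost_effective (br : V -> V -> V) (h : {vspace V}) : Prop :=
  forall I, lie_ideal br I -> (I <= h)%VS -> I = 0%VS.

Definition toral_H_subalgebra (br : V -> V -> V) (h k : {vspace V}) : Prop :=
  [/\ ((h <= k)%VS /\ h != k), ((k <= fullv)%VS /\ k != fullv), lie_subalgebra br k,
      (forall x y, x \in h -> y \in k -> br x y \in k)
    & (forall x y, x \in k -> y \in k -> br x y \in h)].

Definition in_m (Q : V -> V -> R) (h : {vspace V}) (Y : V) : Prop :=
  forall Z, Z \in h -> Q Z Y = 0.

Definition in_mk (Q : V -> V -> R) (h k : {vspace V}) (Y : V) : Prop :=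
  Y \in k /\ in_m Q h Y.

Definition in_mk_perp (Q : V -> V -> R) (h k : {vspace V}) (Y : V) : Prop :=
  in_m Q h Y /\ (forall Z, in_mk Q h k Z -> Q Z Y = 0).

End LieDefs.

From HB Require Import structures.
From mathcomp Require Import all_boot all_order all_algebra.
Set Implicit Arguments. Unset Strict Implicit. Unset Printing Implicit Defensive.
Import Order.TTheory GRing.Theory Num.Theory.
Local Open Scope ring_scope.

(* Let k^perp be the Q-orthogonal complement of k in g; since h <= k, every
   element of k^perp lies in m_k^perp.  So it suffices to show that an X in k
   with [X, k^perp] = 0 vanishes.  Consider the subspace
       a = { X in k | [X, g] <= k }.
   Because g = k (+) k^perp and ad(k) preserves k^perp (Ad-invariance of Q),
   an X in k lies in a exactly when [X, k^perp] = 0.  The Jacobi identity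
   shows that a is an ideal of g; since a <= k and k is toral, [a, a] <= h,
   and [a, a] is again an ideal, so almost effectiveness gives [a, a] = 0.
   Thus a is an abelian ideal, hence zero by semisimplicity, which proves
   the theorem. *)

Section InnerProduct.
Variables (R : realFieldType) (V : vectType R) (Q : V -> V -> R).
Hypothesis HQ : inner_product Q.

Lemma inner_linl (c : R) x y z : Q (c *: x + y) z = c * Q x z + Q y z.
Proof. by case: HQ => H _ _; apply: H. Qed.

Lemma inner_sym x y : Q x y = Q y x.
Proof. by case: HQ => _ H _; apply: H. Qed.

Lemma inner_pos x : x != 0 -> 0 < Q x x.
Proof. by case: HQ => _ _ H; apply: H. Qed.

Lemma inner_linr (c : R) z x y : Q z (c *: x + y) = c * Q z x + Q z y.
Proof. by rewrite inner_sym inner_linl !(inner_sym z). Qed.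

Definition inner_left z : V -> R^o := Q z.

Lemma inner_left_is_linear z : linear (inner_left z).
Proof. by move=> c x y; rewrite /inner_left inner_linr. Qed.
HB.instance Definition _ z :=
  GRing.isLinear.Build R V R^o *:%R (inner_left z) (inner_left_is_linear z).

Definition orthogonal_to (U : {vspace V}) (Z : V) : Prop :=
  forall u, u \in U -> Q u Z = 0.

Lemma orthogonal_to_basis (U : {vspace V}) Z :
  (forall i : 'I_(\dim U), Q (vbasis U)`_i Z = 0) -> orthogonal_to U Z.
Proof.
move=> Hbasis u uU; rewrite inner_sym (coord_vbasis uU).
rewrite -/(inner_left Z _) linear_sum big1 // => i _.
by rewrite linearZ /= /inner_left -inner_sym Hbasis scaler0.
Qed.

Lemma orthogonal_to_self (U : {vspace V}) x :
  x \in U -> orthogonal_to U x -> x = 0.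
Proof.
move=> xU xperp; apply/eqP; apply: contraT => /inner_pos.
by rewrite xperp // ltxx.
Qed.

Lemma orthogonal_toN (U : {vspace V}) Z :
  orthogonal_to U Z -> orthogonal_to U (- Z).
Proof.
move=> Zperp u uU; have := linearN (inner_left u) Z.
by rewrite /= /inner_left Zperp // oppr0.
Qed.

Definition gram_coords (U : {vspace V}) (Y : V) : 'rV[R]_(\dim U) :=
  \row_i Q (vbasis U)`_i Y.

Lemma gram_coords_is_linear U : linear (gram_coords U).
Proof. by move=> c x y; apply/rowP => i; rewrite !mxE inner_linr. Qed.
HB.instance Definition _ U :=
  GRing.isLinear.Build R V _ *:%R (gram_coords U) (gram_coords_is_linear U).

Lemma gram_coords_eq0 (U : {vspace V}) Z :
  gram_coords U Z = 0 -> orthogonal_to U Z.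
Proof.
move=> gram0; apply: orthogonal_to_basis => i.
by have := congr1 (fun m : 'rV_(\dim U) => m 0 i) gram0; rewrite !mxE.
Qed.

Lemma orthogonal_decomposition (U : {vspace V}) Y :
  exists2 y, y \in U & orthogonal_to U (Y - y).
Proof.
pose gram := linfun (gram_coords U).
have injU : (U :&: lker gram = 0)%VS.
  apply/eqP; rewrite -subv0; apply/subvP => y /memv_capP[yU].
  rewrite memv_ker lfunE memv0 => /eqP/gram_coords_eq0 yperp.
  by rewrite (orthogonal_to_self yU yperp).
have ontoU : (gram @: U)%VS = fullv.
  by apply/eqP; rewrite eqEdim subvf dimvf /= limg_dim_eq // dim_matrix mul1r.
have : gram Y \in (gram @: U)%VS by rewrite ontoU memvf.
case/memv_imgP => y yU gramYy; exists y => //.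
move: gramYy; rewrite !lfunE => /= gramYy.
apply: gram_coords_eq0; rewrite (raddfB (gram_coords U)).
by apply/eqP; rewrite subr_eq0; apply/eqP; exact: gramYy.
Qed.

End InnerProduct.

Section LieBracket.
Variables (R : realFieldType) (V : vectType R) (br : V -> V -> V).
Hypothesis Hbr : lie_bracket br.

Lemma lie_linl (c : R) x y z : br (c *: x + y) z = c *: br x z + br y z.
Proof. by case: Hbr => H _ _; apply: H. Qed.

Lemma lie_anti x y : br x y = - br y x.
Proof. by case: Hbr => _ H _; apply: H. Qed.

Lemma lie_jacobi x y z : br x (br y z) + br y (br z x) + br z (br x y) = 0.
Proof. by case: Hbr => _ _ H; apply: H. Qed.

Lemma lie_linr (c : R) z x y : br z (c *: x + y) = c *: br z x + br z y.
Proof.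
by rewrite (lie_anti z) lie_linl (lie_anti x z) (lie_anti y z) scalerN opprD !opprK.
Qed.

Definition ad_left x : V -> V := br x.
Definition ad_right y : V -> V := br^~ y.

Lemma ad_left_is_linear x : linear (ad_left x).
Proof. by move=> c u v; rewrite /ad_left lie_linr. Qed.
HB.instance Definition _ x :=
  GRing.isLinear.Build R V V *:%R (ad_left x) (ad_left_is_linear x).

Lemma ad_right_is_linear y : linear (ad_right y).
Proof. by move=> c u v; rewrite /ad_right lie_linl. Qed.
HB.instance Definition _ y :=
  GRing.isLinear.Build R V V *:%R (ad_right y) (ad_right_is_linear y).

Lemma lie_addl x y z : br (x + y) z = br x z + br y z.
Proof. exact: (raddfD (ad_right z)). Qed.

Lemma lie_subl x y z : br (x - y) z = br x z - br y z.
Proof. exact: (raddfB (ad_right z)). Qed.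

Lemma lie_addr z x y : br z (x + y) = br z x + br z y.
Proof. exact: (raddfD (ad_left z)). Qed.

Lemma lie_0r z : br z 0 = 0.
Proof. exact: (raddf0 (ad_left z)). Qed.

Lemma lie_oppr z x : br z (- x) = - br z x.
Proof. exact: (raddfN (ad_left z)). Qed.

Lemma mem_preim_ad_left x (S : {vspace V}) u :
  (u \in (linfun (ad_left x) @^-1: S)%VS) = (br x u \in S).
Proof. by rewrite -memv_preim lfunE. Qed.

Lemma mem_preim_ad_right y (S : {vspace V}) u :
  (u \in (linfun (ad_right y) @^-1: S)%VS) = (br u y \in S).
Proof. by rewrite -memv_preim lfunE. Qed.

Lemma linear_basis_into (f : {linear V -> V}) (U S : {vspace V}) :
  (forall i : 'I_(\dim U), f (vbasis U)`_i \in S) ->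
  forall u, u \in U -> f u \in S.
Proof.
move=> Hbasis u uU; rewrite (coord_vbasis uU) linear_sum.
by apply: memv_suml => i _; rewrite linearZ memvZ.
Qed.

Lemma mem_bracket_space (U W : {vspace V}) u w :
  u \in U -> w \in W -> br u w \in bracket_space br U W.
Proof.
move=> uU wW; apply: (linear_basis_into (f := ad_right w) _ uU) => i.
apply: (linear_basis_into (f := ad_left _) _ wW) => j.
by apply/memv_span/allpairs_f; apply: mem_nth; rewrite size_tuple.
Qed.

Lemma bracket_space_sub (U W S : {vspace V}) :
  (forall u w, u \in U -> w \in W -> br u w \in S) ->
  (bracket_space br U W <= S)%VS.
Proof.
move=> HS; apply/span_subvP => z /allpairsP [[u w] [/= uU wW ->]].
by apply: HS; apply: vbasis_mem.
Qed.

Lemma lie_derivation x u w : br x (br u w) = br (br x u) w + br u (br x w).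
Proof.
have := lie_jacobi x u w; rewrite (lie_anti w x) lie_oppr (lie_anti w) => /eqP.
by rewrite -addrA addr_eq0 opprD !opprK addrC => /eqP.
Qed.

Lemma bracket_space_ideal (I J : {vspace V}) :
  lie_ideal br I -> lie_ideal br J -> lie_ideal br (bracket_space br I J).
Proof.
move=> idI idJ x z zIJ.
suff : (bracket_space br I J <= linfun (ad_left x) @^-1: bracket_space br I J)%VS.
  by move/subvP => /(_ z zIJ); rewrite mem_preim_ad_left.
apply: bracket_space_sub => u w uI wJ; rewrite mem_preim_ad_left lie_derivation.
by apply: memvD; apply: mem_bracket_space; rewrite ?idI ?idJ.
Qed.

Lemma abelian_ideal_trivial (I : {vspace V}) :
  lie_semisimple br -> lie_ideal br I -> bracket_space br I I = 0%VS ->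
  I = 0%VS.
Proof. by move=> semisimple idI abelianI; apply: semisimple idI _; exists 1%N. Qed.

Section ToralSubalgebra.
Variables (Q : V -> V -> R) (h k : {vspace V}).
Hypotheses (HQ : inner_product Q) (Hinv : ad_invariant br Q)
  (Htor : toral_H_subalgebra br h k).

Lemma toral_sub : (h <= k)%VS.
Proof. by case: Htor => [[]]. Qed.

Lemma toral_subalgebra x y : x \in k -> y \in k -> br x y \in k.
Proof. by case: Htor => _ _ ksub _ _; apply: ksub. Qed.

Lemma toral_bracket x y : x \in k -> y \in k -> br x y \in h.
Proof. by case: Htor => _ _ _ _; apply. Qed.

(* Ad-invariance of Q: ad(k) preserves the orthogonal complement of k. *)
Lemma ad_preserves_perp x Z :
  x \in k -> orthogonal_to Q k Z -> orthogonal_to Q k (br x Z).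
Proof.
move=> xk Zperp u uk; have := Hinv x u Z.
by rewrite Zperp ?toral_subalgebra // add0r.
Qed.

Lemma perp_in_mk_perp Z : orthogonal_to Q k Z -> in_mk_perp Q h k Z.
Proof.
move=> Zperp; split=> [u uh | u [uk _]]; apply: Zperp => //.
exact: subvP toral_sub _ uh.
Qed.

(* The largest subspace a of k with [a, g] <= k, written as the intersection
   of k with the preimages of k under [_, e_i] for a basis (e_i) of g. *)
Definition ad_core : {vspace V} :=
  (k :&: \bigcap_(i < \dim {:V}) (linfun (ad_right (vbasis {:V})`_i) @^-1: k))%VS.

Lemma mem_ad_coreP x : x \in ad_core <-> x \in k /\ forall Y, br x Y \in k.
Proof.
split.
  case/memv_capP => xk; rewrite memvE => /subv_bigcapP Hbasis; split=> // Y.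
  apply: (linear_basis_into (f := ad_left x) _ (memvf Y)) => i.
  by have := Hbasis i isT; rewrite -memvE mem_preim_ad_right.
case=> xk Hk; apply/memv_capP; split=> //; rewrite memvE.
by apply/subv_bigcapP => i _; rewrite -memvE mem_preim_ad_right.
Qed.

(* Using g = k (+) k^perp: X in k lies in a exactly when [X, k^perp] = 0. *)
Lemma mem_ad_core_perpP x :
  x \in ad_core <-> x \in k /\ forall Z, orthogonal_to Q k Z -> br x Z = 0.
Proof.
split.
  case/mem_ad_coreP => xk Hk; split=> // Z Zperp.
  exact: (orthogonal_to_self HQ (Hk Z) (ad_preserves_perp xk Zperp)).
case=> xk Hperp; apply/mem_ad_coreP; split=> // Y.
have [y yk Yperp] := orthogonal_decomposition HQ k Y.
by rewrite -(subrK y Y) lie_addr Hperp // add0r toral_subalgebra.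
Qed.

(* a is an ideal: for y in a and x = x0 + Z with x0 in k, Z in k^perp, one has
   [Z, y] = 0, and [x0, y] is killed by k^perp by the derivation rule. *)
Lemma ad_core_ideal : lie_ideal br ad_core.
Proof.
move=> x y /mem_ad_core_perpP [yk yperp].
have [x0 x0k xperp] := orthogonal_decomposition HQ k x.
rewrite -(subrK x0 x) lie_addl (lie_anti (x - x0)) (yperp (x - x0)) // oppr0 add0r.
apply/mem_ad_core_perpP; split=> [|Z Zperp]; first exact: toral_subalgebra.
have ZxperpN : orthogonal_to Q k (br Z x0).
  by rewrite lie_anti; apply/orthogonal_toN/ad_preserves_perp.
rewrite lie_anti (lie_derivation Z) (lie_anti _ y) yperp // oppr0 add0r.
by rewrite (lie_anti Z) (yperp Z) // oppr0 lie_0r oppr0.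
Qed.

(* a is abelian: [a, a] <= [k, k] <= h is an ideal inside h. *)
Lemma ad_core_abelian :
  almost_effective br h -> bracket_space br ad_core ad_core = 0%VS.
Proof.
move=> effective; apply: effective.
  exact: bracket_space_ideal ad_core_ideal ad_core_ideal.
apply: bracket_space_sub => u w /mem_ad_coreP[uk _] /mem_ad_coreP[wk _].
exact: toral_bracket.
Qed.

Lemma ad_core_trivial :
  lie_semisimple br -> almost_effective br h -> ad_core = 0%VS.
Proof.
move=> semisimple effective.
exact: abelian_ideal_trivial semisimple ad_core_ideal (ad_core_abelian effective).
Qed.

End ToralSubalgebra.

End LieBracket.

Theorem mainTheorem8 (R : realFieldType) (V : vectType R)
    (br : V -> V -> V) (Q : V -> V -> R) (h k : {vspace V}) :
  lie_bracket br -> lie_semisimple br ->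
  inner_product Q -> ad_invariant br Q ->
  lie_subalgebra br h -> almost_effective br h ->
  toral_H_subalgebra br h k ->
  forall X1 X2 : V, X1 \in k -> X2 \in k ->
    (forall Y : V, in_mk_perp Q h k Y -> br X1 Y = br X2 Y) ->
    X1 = X2.
Proof.
move=> Hbr semisimple HQ Hinv _ effective Htor X1 X2 X1k X2k agree.
have core0 := ad_core_trivial Hbr HQ Hinv Htor semisimple effective.
apply/eqP; rewrite -subr_eq0 -memv0 -core0.
apply/(mem_ad_core_perpP Hbr HQ Hinv Htor); split; first exact: memvB.
by move=> Z /(perp_in_mk_perp Htor) Zmk; rewrite lie_subl // agree ?subrr.
Qed.
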